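(* Let $G_1=\langle\Sigma_{1,\tau},Q_1,\rightarrow_1,Q_1^0\rangle$ and $G_2=\langle\Sigma_{2,\tau},Q_2,\rightarrow_2,Q_2^0\rangle$ be nondeterministic automata with sets of secret states $Q_1^S$, $Q_2^S$, and equip $G_1\|G_2$ with secret states $Q^S=\{(x_1,x_2)\mid x_1\in Q_1^S\text{ or }x_2\in Q_2^S\}$. Assume $UR(Q_i^0)\not\subseteq Q_i^S$ for $i=1,2$. For $i=1,2$ let $T_i=TPO(det_d(G_i),det(G_i))$ be the largest three-player observer w.r.t. $G_i$, and let $G_i^T$ be the transformed automaton of $T_i$ (with $j\ne i$ the other index). Let $T=TPO(det_d(G_1\|G_2),det(G_1\|G_2))$ be the largest monolithic three-player observer w.r.t. $G_1\|G_2$, and let $\rho$ be the renaming map. Then for every string $s$ over $\Sigma_{G_1^T}\cup\Sigma_{G_2^T}$: if $s$ is defined from the initial state of $G_1^T\|G_2^T$, then $\rho(s)$ labels a path from the initial state of $T$.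
   Context: Automata: a (nondeterministic) automaton $G=\langle\Sigma_\tau,Q,\rightarrow,Q^0\rangle$ has finite observable alphabet $\Sigma$, special unobservable symbol $\tau$, $\Sigma_\tau=\Sigma\cup\{\tau\}$, $\rightarrow\subseteq Q\times\Sigma_\tau\times Q$, initial states $Q^0$. Deterministic: one initial state, no $\tau$-transitions, functional. $p\overset{s}{\Rightarrow}q$ ($s\in\Sigma^*$): a path from $p$ to $q$ whose labels with $\tau$'s deleted spell $s$. $UR(B)=\{q\mid b\overset{\varepsilon}{\Rightarrow}q,\ b\in B\}$. Observer $det(G)$: deterministic over $\Sigma$, initial state $UR(Q^0)$, $X\xrightarrow{\sigma}Y$ iff $Y=UR(\{y\mid x\xrightarrow{\sigma}y,\ x\in X\})\ne\emptyset$, reachable part. Desired observer $det_d(G)$: $det(G)$ with every state $X\subseteq Q^S$ deleted, reachable part kept. Synchronous composition of $A_1$ (alphabet $\Sigma_1$) and $A_2$ (alphabet $\Sigma_2$): state set $Q_1\times Q_2$, initial states $Q_1^0\times Q_2^0$, marked states $Q_1^m\times Q_2^m$ (when marking is present); shared events ($\Sigma_1\cap\Sigma_2$) move both components simultaneously, events in $(\Sigma_1\setminus\Sigma_2)\cup\{\tau\}$ move only the first, events in $(\Sigma_2\setminus\Sigma_1)\cup\{\tau\}$ move only the second. Largest three-player observer $TPO(D,F)$ for deterministic $D=\langle\Sigma,X_D,\rightarrow_D,d_0\rangle$, $F=\langle\Sigma,X_F,\rightarrow_F,f_0\rangle$: with fresh symbol $\epsilon$ and fresh erasure symbols $\Sigma^r=\{\sigma\to\epsilon\mid\sigma\in\Sigma\}$,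 states are $Y$-states $(d,f)$, $Z$-states $Z((d,f),e)$ ($e\in\Sigma$, called the observable component $E$), $W$-states $W((d,f),a)$ ($a\in\Sigma\cup\Sigma^r$, called the action component $A$); initial state $(d_0,f_0)$; only reachable states; transitions exactly: (1) $(d,f)\xrightarrow{e}Z((d,f),e)$ if $e$ defined at $f$ in $F$; (2) $Z((d,f),e)\xrightarrow{\theta}Z((d',f),e)$ for $\theta\in\Sigma$ if $d\xrightarrow{\theta}_Dd'$; (3) $Z((d,f),e)\xrightarrow{\epsilon}W((d,f),e)$ if $e$ defined at $d$ in $D$ and at $f$ in $F$; (4) $Z((d,f),e)\xrightarrow{e\to\epsilon}W((d,f),e\to\epsilon)$ if $e$ defined at $f$ in $F$; (5) $W((d,f),e)\xrightarrow{e}(d',f')$ with $d\xrightarrow{e}_Dd'$, $f\xrightarrow{e}_Ff'$; (6) $W((d,f),e\to\epsilon)\xrightarrow{e}(d,f')$ with $f\xrightarrow{e}_Ff'$. Transformed automaton: for $T_i=TPO(D_i,F_i)$ over alphabet $\Sigma_i$ and the other index $j$, introduce fresh formal symbols $\theta_e$ (for $\theta\in\Sigma_i\cup\Sigma_j\cup\{\epsilon\}\cup\Sigma_i^r\cup\Sigma_j^r$, $e\in\Sigma_i\cup\Sigma_j$) and $\sigma_{a,w}$ (for $\sigma$ an event and $a$ an event or erasure symbol), all distinct from each other and from events. Let $E_i$ be the set of observable components of $Z$-states of $T_i$ and $A_i$ the set of action components of $W$-states of $T_i$. $G_i^T$ is the deterministic automaton with the same states as $T_i$, initial state the initial $Y$-state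 of $T_i$, marked states all $Y$-states, and transitions: (a) $y\xrightarrow{e}z$ for each transition $y\xrightarrow{e}z$ of $T_i$ out of a $Y$-state; (b) $z\xrightarrow{\theta_e}q$ for each transition $z\xrightarrow{\theta}q$ of $T_i$ out of a $Z$-state $z$ with observable component $e$; (c) $w\xrightarrow{e_{a,w}}y$ for each transition $w\xrightarrow{e}y$ of $T_i$ out of a $W$-state $w$ with action component $a$; (d) a self-loop $y\xrightarrow{\alpha}y$ at every $Y$-state $y$ for every $\alpha\in\Sigma_j\setminus\Sigma_i$. Its alphabet is $\Sigma_{G_i^T}=\Sigma_i\cup(\Sigma_j\setminus\Sigma_i)\cup\{\theta_e\mid\theta\in\Sigma_i\cup\{\epsilon\}\cup\Sigma_i^r,\ e\in E_i\}\cup\{\sigma_{a,w}\mid\sigma\in\Sigma_i,\ a\in A_i\}\cup\{\beta_\alpha,\ \beta_{\alpha,w},\ \beta_{\alpha\to\epsilon,w}\mid\beta\in\Sigma_i\cap\Sigma_j,\ \alpha\in\Sigma_j\setminus\Sigma_i\}$. Renaming: $\rho$ maps each event $e$ to $e$, each $\theta_e$ to $\theta$, and each $\sigma_{a,w}$ to $\sigma$, extended letter-by-letter to strings. *)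

From HB Require Import structures.
From mathcomp Require Import all_boot.
From Stdlib Require List.
Set Implicit Arguments. Unset Strict Implicit. Unset Printing Implicit Defensive.

(* Events range over a finite universe E; the observable alphabet is [alph].  *)
Record nfa (E Q : finType) := Nfa {
  alph : {set E};
  ntrans : Q -> option E -> Q -> bool;   (* None = tau *)
  ninit : {set Q};
  nsecret : {set Q} }.

(* transition relation is a subset of Q x Sigma_tau x Q *)
Definition nfa_wf (E Q : finType) (G : nfa E Q) : Prop :=
  forall p e q, ntrans G p (Some e) q -> e \in alph G.

Definition tau_rel (E Q : finType) (G : nfa E Q) : rel Q :=
  fun p q => ntrans G p None q.

Definition UR (E Q : finType) (G : nfa E Q) (B : {set Q}) : {set Q} :=
  [set q | [exists b in B, connect (tau_rel G) b q]].

Definition post (E Q : finType) (G : nfa E Q) (X : {set Q}) (e : E) : {set Q} :=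
  [set y | [exists x in X, ntrans G x (Some e) y]].

Record dfa (E X : Type) := Dfa { dstep : X -> E -> option X; dinit : X }.

Definition det_step (E Q : finType) (G : nfa E Q) (X : {set Q}) (e : E)
  : option {set Q} :=
  let Y := UR G (post G X e) in
  if (e \in alph G) && (Y != set0) then Some Y else None.

Definition det (E Q : finType) (G : nfa E Q) : dfa E {set Q} :=
  Dfa (det_step G) (UR G (ninit G)).

Definition det_d (E Q : finType) (G : nfa E Q) : dfa E {set Q} :=
  Dfa (fun X e => match det_step G X e with
                  | Some Y => if Y \subset nsecret G then None else Some Y
                  | None => None end)
      (UR G (ninit G)).

Definition sync_trans (E Q1 Q2 : finType) (G1 : nfa E Q1) (G2 : nfa E Q2)
  (p : Q1 * Q2) (l : option E) (q : Q1 * Q2) : bool :=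
  match l with
  | None => (ntrans G1 p.1 None q.1 && (q.2 == p.2))
            || (ntrans G2 p.2 None q.2 && (q.1 == p.1))
  | Some e =>
    if (e \in alph G1) && (e \in alph G2) then
      ntrans G1 p.1 (Some e) q.1 && ntrans G2 p.2 (Some e) q.2
    else if e \in alph G1 then ntrans G1 p.1 (Some e) q.1 && (q.2 == p.2)
    else if e \in alph G2 then ntrans G2 p.2 (Some e) q.2 && (q.1 == p.1)
    else false
  end.

Definition nsync (E Q1 Q2 : finType) (G1 : nfa E Q1) (G2 : nfa E Q2)
  : nfa E (Q1 * Q2)%type :=
  Nfa (alph G1 :|: alph G2) (sync_trans G1 G2)
      (setX (ninit G1) (ninit G2))
      [set x | (x.1 \in nsecret G1) || (x.2 \in nsecret G2)].

Inductive act (E : Type) := AEv of E | AEr of E.           (* e  /  e -> eps *)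
Inductive tlabel (E : Type) := LEv of E | LEps | LEr of E.
Inductive tstate (XD XF E : Type) :=
  | TY of XD & XF
  | TZ of XD & XF & E
  | TW of XD & XF & act E.
Arguments AEv {E}. Arguments AEr {E}.
Arguments LEv {E}. Arguments LEps {E}. Arguments LEr {E}.
Arguments TY {XD XF E}. Arguments TZ {XD XF E}. Arguments TW {XD XF E}.

Definition tpo_step (E : eqType) (XD XF : Type) (D : dfa E XD) (F : dfa E XF)
  (q : tstate XD XF E) (l : tlabel E) : option (tstate XD XF E) :=
  match q, l with
  | TY d f, LEv e =>
      if dstep F f e is Some _ then Some (TZ d f e) else None
  | TZ d f e, LEv th =>
      if dstep D d th is Some d' then Some (TZ d' f e) else None
  | TZ d f e, LEps =>
      if (dstep D d e) && (dstep F f e) then Some (TW d f (AEv e)) else None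
  | TZ d f e, LEr e' =>
      if (e' == e) && (dstep F f e) then Some (TW d f (AEr e)) else None
  | TW d f (AEv e), LEv e' =>
      if e' == e then
        match dstep D d e, dstep F f e with
        | Some d', Some f' => Some (TY d' f')
        | _, _ => None end
      else None
  | TW d f (AEr e), LEv e' =>
      if e' == e then
        (if dstep F f e is Some f' then Some (TY d f') else None)
      else None
  | _, _ => None
  end.

Definition tpo_rel (E : eqType) XD XF (D : dfa E XD) (F : dfa E XF)
  : tstate XD XF E -> tlabel E -> tstate XD XF E -> Prop :=
  fun q l q' => tpo_step D F q l = Some q'.

Definition tpo_init (E : eqType) XD XF (D : dfa E XD) (F : dfa E XF)
  : tstate XD XF E := TY (dinit D) (dinit F).

Inductive lpath (S L : Type) (T : S -> L -> S -> Prop) : S -> seq L -> S -> Prop :=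
  | lp_nil q : lpath T q [::] q
  | lp_cons q l q' s q'' : T q l q' -> lpath T q' s q'' -> lpath T q (l :: s) q''.

Definition tpo_reach (E : eqType) XD XF (D : dfa E XD) (F : dfa E XF)
  (q : tstate XD XF E) : Prop :=
  exists s, lpath (tpo_rel D F) (tpo_init D F) s q.

(* symbols: events e, formal theta_e, formal sigma_{a,w} *)
Inductive sym (E : Type) :=
  | SEv of E
  | STheta of tlabel E & E
  | SW of E & act E.
Arguments SEv {E}. Arguments STheta {E}. Arguments SW {E}.

Notation gstate Q E := (tstate {set Q} {set Q} E).

(* T_i = TPO(det_d G, det G); Sj = alphabet of the other component *)
Inductive gT_trans (E Q : finType) (G : nfa E Q) (Sj : {set E})
  : gstate Q E -> sym E -> gstate Q E -> Prop :=
  | gT_a d f e z : tpo_step (det_d G) (det G) (TY d f) (LEv e) = Some z ->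
      gT_trans G Sj (TY d f) (SEv e) z
  | gT_b d f e th q : tpo_step (det_d G) (det G) (TZ d f e) th = Some q ->
      gT_trans G Sj (TZ d f e) (STheta th e) q
  | gT_c d f a e y : tpo_step (det_d G) (det G) (TW d f a) (LEv e) = Some y ->
      gT_trans G Sj (TW d f a) (SW e a) y
  | gT_d d f al : al \in Sj -> al \notin alph G ->
      gT_trans G Sj (TY d f) (SEv al) (TY d f).

Definition gT_init (E Q : finType) (G : nfa E Q) : gstate Q E :=
  tpo_init (det_d G) (det G).

Definition gT_E (E Q : finType) (G : nfa E Q) (e : E) : Prop :=
  exists d f, tpo_reach (det_d G) (det G) (TZ d f e).
Definition gT_A (E Q : finType) (G : nfa E Q) (a : act E) : Prop :=
  exists d f, tpo_reach (det_d G) (det G) (TW d f a).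

Definition gT_alph (E Q : finType) (G : nfa E Q) (Sj : {set E}) (x : sym E) : Prop :=
  let Si := alph G in
  match x with
  | SEv e => e \in Si \/ (e \in Sj :\: Si)
  | STheta th e =>
      ((match th with LEv t => t \in Si | LEps => True | LEr t => t \in Si end)
        /\ gT_E G e)
      \/ (exists b, th = LEv b /\ b \in Si :&: Sj /\ e \in Sj :\: Si)
  | SW s a =>
      (s \in Si /\ gT_A G a)
      \/ (s \in Si :&: Sj /\
          exists al, (a = AEv al \/ a = AEr al) /\ al \in Sj :\: Si)
  end.

Inductive psync (S1 S2 L : Type) (A1 : L -> Prop) (T1 : S1 -> L -> S1 -> Prop)
  (A2 : L -> Prop) (T2 : S2 -> L -> S2 -> Prop) : S1 * S2 -> L -> S1 * S2 -> Prop :=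
  | ps_both p1 p2 q1 q2 l : A1 l -> A2 l -> T1 p1 l q1 -> T2 p2 l q2 ->
      psync A1 T1 A2 T2 (p1, p2) l (q1, q2)
  | ps_left p1 p2 q1 l : A1 l -> ~ A2 l -> T1 p1 l q1 ->
      psync A1 T1 A2 T2 (p1, p2) l (q1, p2)
  | ps_right p1 p2 q2 l : ~ A1 l -> A2 l -> T2 p2 l q2 ->
      psync A1 T1 A2 T2 (p1, p2) l (p1, q2).

Definition rho (E : Type) (x : sym E) : tlabel E :=
  match x with
  | SEv e => LEv e
  | STheta th _ => th
  | SW s _ => LEv s
  end.

(* The monolithic observer simulates the synchronous product of the transformed
   automata.  A pair of component states of the same kind (Y, Z or W) with observer
   sets d_i, f_i corresponds to the monolithic state of that kind with the rectangles
   d_1 x d_2 and f_1 x f_2; a component whose alphabet misses the pending event waits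
   in its Y-state.  This works because the observer of G_1 || G_2 acts on rectangles
   componentwise: unobservable reaches and observable post-images of rectangles are
   rectangles, and a private event leaves the other factor untouched.  Every reachable
   d_i leaves Q_i^S (initially by the assumption on UR(Q_i^0), afterwards because
   det_d(G_i) deletes the other sets), so d_1 x d_2 leaves Q^S and is never deleted
   by det_d(G_1 || G_2). *)

From HB Require Import structures.
From mathcomp Require Import all_boot.
From Stdlib Require List.
Set Implicit Arguments. Unset Strict Implicit. Unset Printing Implicit Defensive.

Definition component_step (St L : Type) (A : L -> Prop) (T : St -> L -> St -> Prop)
    (p : St) (x : L) (q : St) : Prop :=
  (A x /\ T p x q) \/ (~ A x /\ q = p).

Lemma psync_component_step (St1 St2 L : Type)
    (A1 : L -> Prop) (T1 : St1 -> L -> St1 -> Prop)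
    (A2 : L -> Prop) (T2 : St2 -> L -> St2 -> Prop) p1 p2 x q1 q2 :
  psync A1 T1 A2 T2 (p1, p2) x (q1, q2) ->
  [/\ A1 x \/ A2 x, component_step A1 T1 p1 x q1 & component_step A2 T2 p2 x q2].
Proof. by move=> H; inversion H; subst; rewrite /component_step; split; tauto. Qed.

Lemma lpath_inv (St L : Type) (T : St -> L -> St -> Prop) (P : St -> Prop) p s q :
  (forall x l y, P x -> T x l y -> P y) -> P p -> lpath T p s q -> P q.
Proof. by move=> HP Hp H; elim: H Hp => // x l y s' z Hxy _ IH /HP/(_ Hxy). Qed.

Lemma component_step_moves (St L : Type) (A : L -> Prop) (T : St -> L -> St -> Prop) p x q :
  component_step A T p x q -> A x -> T p x q.
Proof. by case=> [[]|[]]. Qed.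

Lemma lpath_rcons (St L : Type) (T : St -> L -> St -> Prop) p s q l q' :
  lpath T p s q -> T q l q' -> lpath T p (rcons s l) q'.
Proof.
elim=> [x|x l0 y s' z Hxy _ IH] Hl /=; first by apply: lp_cons Hl (lp_nil _ _).
by apply: lp_cons Hxy (IH Hl).
Qed.

Lemma homo_connect (T T' : finType) (e : rel T) (e' : rel T') (h : T -> T') :
  {homo h : x y / e x y >-> e' x y} ->
  {homo h : x y / connect e x y >-> connect e' x y}.
Proof.
move=> he x y /connectP[p + ->]; elim: p x => [|z p IH] x /=; first by rewrite connect0.
by case/andP=> /he/connect1/connect_trans Hxz /IH; apply: Hxz.
Qed.

Lemma exists_setX (T1 T2 : finType) (A : {set T1}) (B : {set T2})
    (P : pred T1) (Q : pred T2) :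
  [exists p in setX A B, P p.1 && Q p.2] = [exists a in A, P a] && [exists b in B, Q b].
Proof.
apply/existsP/andP => [[[a b]]|[/existsP[a /andP[Ha Pa]] /existsP[b /andP[Hb Qb]]]].
  rewrite inE => /andP[/andP[Ha Hb] /andP[Pa Qb]].
  by split; apply/existsP; [exists a | exists b]; apply/andP.
by exists (a, b); rewrite inE Ha Hb Pa Qb.
Qed.

Definition obs_state (E Q : finType) (G : nfa E Q) (X : {set Q}) : Prop :=
  UR G X = X /\ X != set0.

Definition public_state (E Q : finType) (G : nfa E Q) (X : {set Q}) : Prop :=
  UR G X = X /\ ~~ (X \subset nsecret G).

Definition local_dstep (E : finType) (X : Type) (D : dfa E X) (S : {set E})
    (x : X) (e : E) (x' : X) : Prop :=
  if e \in S then dstep D x e = Some x' else x' = x.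

Definition local_move (E Q : finType) (G : nfa E Q) (p : Q) (e : E) (q : Q) : bool :=
  if e \in alph G then ntrans G p (Some e) q else q == p.

Definition local_post (E Q : finType) (G : nfa E Q) (X : {set Q}) (e : E) :=
  if e \in alph G then post G X e else X.

Section Observer.

Variables (E Q : finType) (G : nfa E Q).

Lemma UR_id (B : {set Q}) : UR G (UR G B) = UR G B.
Proof.
apply/setP=> x; rewrite !inE; apply/existsP/existsP.
- case=> y /andP[]; rewrite inE => /existsP[b /andP[Hb Hby]] Hyx.
  by exists b; rewrite Hb (connect_trans Hby Hyx).
- case=> b /andP[Hb Hbx]; exists x; rewrite connect0 andbT inE.
  by apply/existsP; exists b; rewrite Hb.
Qed.

Lemma det_stepP X e Y :
  det_step G X e = Some Y <-> [/\ e \in alph G, Y = UR G (post G X e) & Y != set0].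
Proof.
rewrite /det_step; split; first by case: ifP => // /andP[? ?] [<-].
by case=> He -> HY; rewrite He HY.
Qed.

Lemma det_dP X e Y :
  dstep (det_d G) X e = Some Y <-> det_step G X e = Some Y /\ ~~ (Y \subset nsecret G).
Proof.
rewrite /det_d /=; case: (det_step G X e) => [Z|]; last by split=> // -[].
case: ifP => HZ; split=> //; first by case=> [[<-]]; rewrite HZ.
- by case=> <-; rewrite HZ.
- by case.
Qed.

Lemma det_step_obs X e Y :
  dstep (det G) X e = Some Y -> e \in alph G /\ obs_state G Y.
Proof. by case/det_stepP=> He -> HY; rewrite /obs_state UR_id. Qed.

Lemma det_d_step_public X e Y :
  dstep (det_d G) X e = Some Y -> e \in alph G /\ public_state G Y.
Proof. by case/det_dP=> /det_step_obs[He [HU _]] HS. Qed.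

Lemma public_obs X : public_state G X -> obs_state G X.
Proof.
by case=> HU HS; split=> //; apply: contraNneq HS => ->; rewrite sub0set.
Qed.

Lemma mem_local_post X e y :
  (y \in local_post G X e) = [exists x in X, local_move G x e y].
Proof.
rewrite /local_post /local_move; case: ifP => _; first by rewrite inE.
apply/idP/existsP => [Hy|[x /andP[Hx /eqP->]] //].
by exists y; rewrite Hy eqxx.
Qed.

Lemma local_dstep_det X e X' :
  obs_state G X -> local_dstep (det G) (alph G) X e X' ->
  X' = UR G (local_post G X e) /\ X' != set0.
Proof.
rewrite /local_dstep /local_post => -[HU HX]; case: ifP => _; last by move=> ->.
by case/det_stepP.
Qed.

Lemma local_dstep_det_d X e X' :
  public_state G X -> local_dstep (det_d G) (alph G) X e X' ->
  local_dstep (det G) (alph G) X e X' /\ ~~ (X' \subset nsecret G).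
Proof.
rewrite /local_dstep => -[_ HS]; case: ifP => _; last by move=> ->.
by case/det_dP.
Qed.

End Observer.

Section Product.

Variables (E Q1 Q2 : finType) (G1 : nfa E Q1) (G2 : nfa E Q2).
Local Notation N := (nsync G1 G2).

Lemma connect_tau_nsync a b x y :
  connect (tau_rel N) (a, b) (x, y) =
  connect (tau_rel G1) a x && connect (tau_rel G2) b y.
Proof.
apply/idP/andP.
- case/connectP=> p + Hlast; elim: p a b Hlast => [|[a' b'] p IH] a b /=.
    by case=> -> ->; rewrite !connect0.
  move=> Hlast /andP[Hstep /(IH _ _ Hlast)[Ha Hb]].
  by case/orP: Hstep => /andP[Ht /eqP Heq]; subst;
    split=> //; apply: connect_trans (connect1 Ht) _.
- case=> H1 H2; apply: (@connect_trans _ _ (x, b)).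
  + apply: (homo_connect (h := fun u => (u, b))) H1 => u v Huv.
    by rewrite /tau_rel /= in Huv *; rewrite Huv eqxx.
  + apply: (homo_connect (h := fun v => (x, v))) H2 => u v Huv.
    by rewrite /tau_rel /= in Huv *; rewrite Huv eqxx orbT.
Qed.

Lemma UR_nsync_setX (A : {set Q1}) (B : {set Q2}) :
  UR N (setX A B) = setX (UR G1 A) (UR G2 B).
Proof.
apply/setP=> -[x y]; rewrite !inE -exists_setX.
by apply: eq_existsb => -[a b]; rewrite connect_tau_nsync.
Qed.

Lemma ntrans_nsync_local p e q :
  e \in alph G1 :|: alph G2 ->
  ntrans N p (Some e) q = local_move G1 p.1 e q.1 && local_move G2 p.2 e q.2.
Proof.
rewrite inE /local_move /=.
by case: (e \in alph G1); case: (e \in alph G2) => //= _; apply: andbC.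
Qed.

Lemma post_nsync_setX (A : {set Q1}) (B : {set Q2}) e :
  e \in alph G1 :|: alph G2 ->
  post N (setX A B) e = setX (local_post G1 A e) (local_post G2 B e).
Proof.
move=> He; apply/setP=> -[x y]; rewrite !inE !mem_local_post -exists_setX.
by apply: eq_existsb => p; rewrite ntrans_nsync_local.
Qed.

Lemma setX_not_secret (A : {set Q1}) (B : {set Q2}) :
  ~~ (A \subset nsecret G1) -> ~~ (B \subset nsecret G2) ->
  ~~ (setX A B \subset nsecret N).
Proof.
case/subsetPn=> a Ha Na /subsetPn[b Hb Nb]; apply/subsetPn; exists (a, b).
  by rewrite inE Ha Hb.
by rewrite inE negb_or Na Nb.
Qed.

Lemma det_step_nsync (A A' : {set Q1}) (B B' : {set Q2}) e :
  e \in alph G1 :|: alph G2 -> obs_state G1 A -> obs_state G2 B ->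
  local_dstep (det G1) (alph G1) A e A' -> local_dstep (det G2) (alph G2) B e B' ->
  dstep (det N) (setX A B) e = Some (setX A' B').
Proof.
move=> He HA HB /(local_dstep_det HA)[-> HA'] /(local_dstep_det HB)[-> HB'].
apply/det_stepP; rewrite post_nsync_setX // UR_nsync_setX; split=> //.
by rewrite -card_gt0 cardsX muln_gt0 !card_gt0 HA' HB'.
Qed.

Lemma det_d_step_nsync (A A' : {set Q1}) (B B' : {set Q2}) e :
  e \in alph G1 :|: alph G2 -> public_state G1 A -> public_state G2 B ->
  local_dstep (det_d G1) (alph G1) A e A' -> local_dstep (det_d G2) (alph G2) B e B' ->
  dstep (det_d N) (setX A B) e = Some (setX A' B').
Proof.
move=> He HA HB /(local_dstep_det_d HA)[HA' SA'] /(local_dstep_det_d HB)[HB' SB'].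
apply/det_dP; split; last exact: setX_not_secret.
exact: det_step_nsync (public_obs HA) (public_obs HB) HA' HB'.
Qed.

End Product.

Definition act_e (E : Type) (a : act E) : E := match a with AEv e | AEr e => e end.

Definition is_TY (XD XF E : Type) (q : tstate XD XF E) : bool :=
  if q is TY _ _ then true else false.

Definition local_Z (E : finType) XD XF (S : {set E}) (d : XD) (f : XF) e :=
  if e \in S then TZ d f e else TY d f.

Definition local_W (E : finType) XD XF (S : {set E}) (d : XD) (f : XF) a :=
  if act_e a \in S then TW d f a else TY d f.

Lemma is_TY_local_Z (E : finType) XD XF (S : {set E}) (d : XD) (f : XF) e :
  is_TY (local_Z S d f e) = (e \notin S).
Proof. by rewrite /local_Z; case: ifP. Qed.

Lemma is_TY_local_W (E : finType) XD XF (S : {set E}) (d : XD) (f : XF) a :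
  is_TY (local_W S d f a) = (act_e a \notin S).
Proof. by rewrite /local_W; case: ifP. Qed.

Definition sets_of (XD XF E : Type) (q : tstate XD XF E) : XD * XF :=
  match q with TY d f | TZ d f _ | TW d f _ => (d, f) end.

Lemma sets_of_local_Z (E : finType) XD XF (S : {set E}) (d : XD) (f : XF) e :
  sets_of (local_Z S d f e) = (d, f).
Proof. by rewrite /local_Z; case: ifP. Qed.

Lemma sets_of_local_W (E : finType) XD XF (S : {set E}) (d : XD) (f : XF) a :
  sets_of (local_W S d f a) = (d, f).
Proof. by rewrite /local_W; case: ifP. Qed.

Section ThreePlayerObserver.

Variables (E : eqType) (XD XF : Type) (D : dfa E XD) (F : dfa E XF).

Lemma tpo_step_YZ d f e f' :
  dstep F f e = Some f' -> tpo_step D F (TY d f) (LEv e) = Some (TZ d f e).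
Proof. by move=> /= ->. Qed.

Lemma tpo_step_ZZ d f e t d' :
  dstep D d t = Some d' -> tpo_step D F (TZ d f e) (LEv t) = Some (TZ d' f e).
Proof. by move=> /= ->. Qed.

Lemma tpo_step_ZW d f e d' f' :
  dstep D d e = Some d' -> dstep F f e = Some f' ->
  tpo_step D F (TZ d f e) LEps = Some (TW d f (AEv e)).
Proof. by move=> /= -> ->. Qed.

Lemma tpo_step_ZW_erase d f e f' :
  dstep F f e = Some f' -> tpo_step D F (TZ d f e) (LEr e) = Some (TW d f (AEr e)).
Proof. by move=> /= ->; rewrite eqxx. Qed.

Lemma tpo_step_WY d f e d' f' :
  dstep D d e = Some d' -> dstep F f e = Some f' ->
  tpo_step D F (TW d f (AEv e)) (LEv e) = Some (TY d' f').
Proof. by move=> /= -> ->; rewrite eqxx. Qed.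

Lemma tpo_step_WY_erase d f e f' :
  dstep F f e = Some f' -> tpo_step D F (TW d f (AEr e)) (LEv e) = Some (TY d f').
Proof. by move=> /= ->; rewrite eqxx. Qed.

End ThreePlayerObserver.

Section Component.

Variables (E Q : finType) (G : nfa E Q) (Sj : {set E}).
Hypothesis init_public : ~~ (UR G (ninit G) \subset nsecret G).

Local Notation S := (alph G).
Local Notation D := (det_d G).
Local Notation F := (det G).
Local Notation reach := (tpo_reach D F).

Definition good_sets (q : gstate Q E) : Prop :=
  public_state G (sets_of q).1 /\ obs_state G (sets_of q).2.

Lemma good_sets_step q l q' : good_sets q -> tpo_step D F q l = Some q' -> good_sets q'.
Proof.
(* [cbn [tpo_step]] rather than [simpl], which would also unfold [dstep (det_d G)]. *)
case: q => [d f|d f e|d f [e|e]] [Hd Hf]; case: l => [t| |t]; cbn [tpo_step]; try by [].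
- by case: (dstep F f t) => [?|] // [<-].
- case Hd': (dstep D d t) => [d'|] // [<-].
  by split; [apply: (det_d_step_public Hd').2 | apply: Hf].
- by case: (dstep D d e) => [?|] //; case: (dstep F f e) => [?|] // [<-].
- by case: eqP => // _; case: (dstep F f e) => [?|] // [<-].
- case: eqP => // _; case Hd': (dstep D d e) => [d'|] //.
  case Hf': (dstep F f e) => [f'|] // [<-].
  by split; [apply: (det_d_step_public Hd').2 | apply: (det_step_obs Hf').2].
- case: eqP => // _; case Hf': (dstep F f e) => [f'|] // [<-].
  by split; [apply: Hd | apply: (det_step_obs Hf').2].
Qed.

Lemma reach_good_sets q : reach q -> good_sets q.
Proof.
case=> s; apply: lpath_inv => [x l y|]; first exact: good_sets_step.
have Hpub : public_state G (UR G (ninit G)) by rewrite /public_state UR_id.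
by split=> //; apply: public_obs.
Qed.

Local Notation gA := (gT_alph G Sj).
Local Notation gT := (gT_trans G Sj).
Local Notation follow := (component_step gA gT).

Lemma gT_alph_SEv e : gA (SEv e) <-> e \in S :|: Sj.
Proof. by rewrite /= !inE; case: (e \in S); case: (e \in Sj); intuition. Qed.

Lemma gT_alph_LEv t e : gA (STheta (LEv t) e) -> t \in S.
Proof. by case=> [[]|[b [[<-] [/setIP[]]]]]. Qed.

Lemma gT_transE q x q' :
  gT q x q' <->
  match q, x with
  | TY _ _, SEv e => tpo_step D F q (LEv e) = Some q' \/ [/\ e \in Sj, e \notin S & q' = q]
  | TZ _ _ e, STheta th e' => e' = e /\ tpo_step D F q th = Some q'
  | TW _ _ a, SW e a' => a' = a /\ tpo_step D F q (LEv e) = Some q'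
  | _, _ => False
  end.
Proof.
split; first by case=> *; [left | split | split | right].
case: q x => [d f|d f e|d f a] [e'|th e'|e' a'] //=.
- by case=> [|[? ? ->]]; [apply: gT_a | apply: gT_d].
- by case=> ->; apply: gT_b.
- by case=> ->; apply: gT_c.
Qed.

Lemma gT_trans_TY d f x q : gT (TY d f) x q -> exists e, x = SEv e.
Proof. by case: x => [e|th e|s a] /gT_transE // _; exists e. Qed.

Lemma gT_trans_LEr q e' e q' : gT q (STheta (LEr e') e) q' -> e' = e.
Proof. by case: q => [d f|d f e0|d f a] /gT_transE //= [->]; case: eqP. Qed.

Lemma gT_trans_local_Z d f e x q :
  gT (local_Z S d f e) x q -> (exists e', x = SEv e') \/ exists th, x = STheta th e.
Proof.
rewrite /local_Z; case: ifP => _ /gT_transE; case: x => [e'|th e'|s a] //=.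
  by case=> ->; right; exists th.
by left; exists e'.
Qed.

Lemma gT_trans_local_W d f a x q :
  gT (local_W S d f a) x q -> (exists e', x = SEv e') \/ x = SW (act_e a) a.
Proof.
rewrite /local_W; case: ifP => _ /gT_transE; case: x => [e'|th e'|s a'] //=.
  by case=> ->; case: a => e /=; case: eqP => [->|] //; right.
by left; exists e'.
Qed.

Lemma follow_SEv_TY q e q' : e \in S :|: Sj -> follow q (SEv e) q' -> is_TY q.
Proof. by move/gT_alph_SEv => He [[_]|[]//]; case: q => // d f e0 /gT_transE. Qed.

Lemma follow_Y d f e q :
  e \in S :|: Sj -> follow (TY d f) (SEv e) q ->
  exists f', local_dstep F S f e f' /\ q = local_Z S d f e.
Proof.
move=> He [[_ /gT_transE]|[nA _]]; last by case: nA; apply/gT_alph_SEv.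
rewrite /local_dstep /local_Z; cbn [tpo_step] => -[|[_ /negbTE-> ->]]; last by exists f.
by case Hf: (dstep F f e) => [f'|] // [<-]; exists f'; rewrite (det_step_obs Hf).1.
Qed.

Lemma follow_Z_LEv d f e t q :
  reach (local_Z S d f e) -> e \in S :|: Sj -> (~ gA (STheta (LEv t) e) -> t \in Sj) ->
  follow (local_Z S d f e) (STheta (LEv t) e) q ->
  exists d', local_dstep D S d t d' /\ q = local_Z S d' f e.
Proof.
rewrite /local_Z; case: ifP => HeS Hreach He Hidle [[_ /gT_transE]|[nA ->]] //.
- cbn [tpo_step] => -[_]; case Hd: (dstep D d t) => [d'|] // [<-].
  by exists d'; rewrite /local_dstep (det_d_step_public Hd).1.
- exists d; rewrite /local_dstep; case: ifP => // HtS.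
  by case: nA; left; split=> //; exists d, f.
- exists d; rewrite /local_dstep; case: ifP => // HtS.
  have HtSj := Hidle nA; case: nA; right; exists t; split=> //.
  rewrite !inE HtS HtSj HeS.
  by move: He; rewrite inE HeS.
Qed.

Lemma follow_Z_LEps d f e q :
  reach (local_Z S d f e) -> follow (local_Z S d f e) (STheta LEps e) q ->
  exists d' f', [/\ local_dstep D S d e d', local_dstep F S f e f'
                  & q = local_W S d f (AEv e)].
Proof.
rewrite /local_dstep /local_W /local_Z [act_e _]/=.
case: ifP => HeS Hreach [[_ /gT_transE]|[nA ->]] //.
- cbn [tpo_step] => -[_]; case Hd: (dstep D d e) => [d'|] //.
  by case Hf: (dstep F f e) => [f'|] // [<-]; exists d', f'.
- by case: nA; left; split=> //; exists d, f.
- by exists d, f.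
Qed.

Lemma follow_Z_LEr d f e q :
  reach (local_Z S d f e) -> follow (local_Z S d f e) (STheta (LEr e) e) q ->
  exists f', local_dstep F S f e f' /\ q = local_W S d f (AEr e).
Proof.
rewrite /local_dstep /local_W /local_Z [act_e _]/=.
case: ifP => HeS Hreach [[_ /gT_transE]|[nA ->]] //.
- cbn [tpo_step] => -[_]; rewrite eqxx.
  by case Hf: (dstep F f e) => [f'|] // [<-]; exists f'.
- by case: nA; left; split; [rewrite HeS | exists d, f].
- by exists f.
Qed.

Lemma follow_W_AEv d f e q :
  reach (local_W S d f (AEv e)) -> follow (local_W S d f (AEv e)) (SW e (AEv e)) q ->
  exists d' f', [/\ local_dstep D S d e d', local_dstep F S f e f' & q = TY d' f'].
Proof.
rewrite /local_dstep /local_W [act_e _]/=.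
case: ifP => HeS Hreach [[_ /gT_transE]|[nA ->]] //.
- cbn [tpo_step] => -[_]; rewrite eqxx; case Hd: (dstep D d e) => [d'|] //.
  by case Hf: (dstep F f e) => [f'|] // [<-]; exists d', f'.
- by case: nA; left; split; last exists d, f.
- by exists d, f.
Qed.

Lemma follow_W_AEr d f e q :
  reach (local_W S d f (AEr e)) -> follow (local_W S d f (AEr e)) (SW e (AEr e)) q ->
  exists f', local_dstep F S f e f' /\ q = TY d f'.
Proof.
rewrite /local_dstep /local_W [act_e _]/=.
case: ifP => HeS Hreach [[_ /gT_transE]|[nA ->]] //.
- cbn [tpo_step] => -[_]; rewrite eqxx.
  by case Hf: (dstep F f e) => [f'|] // [<-]; exists f'.
- by case: nA; left; split; last exists d, f.
- by exists f.
Qed.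

Lemma reach_follow q x q' : reach q -> follow q x q' -> reach q'.
Proof.
move=> [s Hs] [[_ Ht]|[_ ->]]; last by exists s.
case: Ht Hs => [d f e z H|d f e th z H|d f a e z H|d f al _ _] Hs; last by exists s.
all: by eexists; apply: lpath_rcons Hs H.
Qed.

End Component.

Section Simulation.

Variables (E Q1 Q2 : finType) (G1 : nfa E Q1) (G2 : nfa E Q2).
Hypothesis public1 : ~~ (UR G1 (ninit G1) \subset nsecret G1).
Hypothesis public2 : ~~ (UR G2 (ninit G2) \subset nsecret G2).

Local Notation S1 := (alph G1).
Local Notation S2 := (alph G2).
Local Notation N := (nsync G1 G2).
Local Notation reach1 := (tpo_reach (det_d G1) (det G1)).
Local Notation reach2 := (tpo_reach (det_d G2) (det G2)).
Local Notation PS :=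
  (psync (gT_alph G1 S2) (gT_trans G1 S2) (gT_alph G2 S1) (gT_trans G2 S1)).
Local Notation step := (tpo_step (det_d N) (det N)).

Inductive sim_rel : gstate Q1 E * gstate Q2 E -> gstate (Q1 * Q2) E -> Prop :=
  | SimY d1 f1 d2 f2 :
      sim_rel (TY d1 f1, TY d2 f2) (TY (setX d1 d2) (setX f1 f2))
  | SimZ d1 f1 d2 f2 e : e \in S1 :|: S2 ->
      sim_rel (local_Z S1 d1 f1 e, local_Z S2 d2 f2 e) (TZ (setX d1 d2) (setX f1 f2) e)
  | SimW d1 f1 d2 f2 a : act_e a \in S1 :|: S2 ->
      sim_rel (local_W S1 d1 f1 a, local_W S2 d2 f2 a) (TW (setX d1 d2) (setX f1 f2) a).

Lemma PS_SEv_TY_TY p1 p2 e q1 q2 : PS (p1, p2) (SEv e) (q1, q2) -> is_TY p1 && is_TY p2.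
Proof.
move=> H; have [Hmove F1 F2] := psync_component_step H.
have He : e \in S1 :|: S2 by case: Hmove => /gT_alph_SEv; rewrite // setUC.
by rewrite (follow_SEv_TY He F1) (follow_SEv_TY _ F2) // setUC.
Qed.

Lemma PS_local_Z_STheta d1 f1 d2 f2 e x q :
  e \in S1 :|: S2 -> PS (local_Z S1 d1 f1 e, local_Z S2 d2 f2 e) x q ->
  exists th, x = STheta th e.
Proof.
case: q => q1 q2 He H; have [Hmove F1 F2] := psync_component_step H.
case: x H Hmove F1 F2 => [e'|th e'|s a] H Hmove F1 F2.
- by move/PS_SEv_TY_TY: H; rewrite !is_TY_local_Z -negb_or -in_setU He.
- by case: Hmove => [/(component_step_moves F1)|/(component_step_moves F2)]
    /gT_trans_local_Z[[]|[th' [-> ->]]] //; exists th'.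
- by case: Hmove => [/(component_step_moves F1)|/(component_step_moves F2)]
    /gT_trans_local_Z[[]|[]].
Qed.

Lemma PS_local_W_SW d1 f1 d2 f2 a x q :
  act_e a \in S1 :|: S2 -> PS (local_W S1 d1 f1 a, local_W S2 d2 f2 a) x q ->
  x = SW (act_e a) a.
Proof.
case: q => q1 q2 He H; have [Hmove F1 F2] := psync_component_step H.
case: x H Hmove F1 F2 => [e'|th e'|s a'] H Hmove F1 F2.
- by move/PS_SEv_TY_TY: H; rewrite !is_TY_local_W -negb_or -in_setU He.
- by case: Hmove => [/(component_step_moves F1)|/(component_step_moves F2)]
    /gT_trans_local_W[[]|].
- by case: Hmove => [/(component_step_moves F1)|/(component_step_moves F2)]
    /gT_trans_local_W[[]|].
Qed.

Lemma sim_step_Y d1 f1 d2 f2 x q1 q2 :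
  reach1 (TY d1 f1) -> reach2 (TY d2 f2) -> PS (TY d1 f1, TY d2 f2) x (q1, q2) ->
  exists2 m', step (TY (setX d1 d2) (setX f1 f2)) (rho x) = Some m' & sim_rel (q1, q2) m'.
Proof.
move=> R1 R2 H; have [Hmove F1 F2] := psync_component_step H.
have [e Hx] : exists e, x = SEv e.
  by case: Hmove => [/(component_step_moves F1)|/(component_step_moves F2)] /gT_trans_TY.
subst x; have He : e \in S1 :|: S2 by case: Hmove => /gT_alph_SEv; rewrite // setUC.
have He' : e \in S2 :|: S1 by rewrite setUC.
move: F1 F2 => /(follow_Y He)[f1' [Hf1 ->]] /(follow_Y He')[f2' [Hf2 ->]].
exists (TZ (setX d1 d2) (setX f1 f2) e); last exact: SimZ.
have [[_ O1] [_ O2]] := (reach_good_sets public1 R1, reach_good_sets public2 R2).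
by apply: tpo_step_YZ; apply: det_step_nsync Hf1 Hf2.
Qed.

Lemma sim_step_Z d1 f1 d2 f2 e x q1 q2 :
  e \in S1 :|: S2 -> reach1 (local_Z S1 d1 f1 e) -> reach2 (local_Z S2 d2 f2 e) ->
  PS (local_Z S1 d1 f1 e, local_Z S2 d2 f2 e) x (q1, q2) ->
  exists2 m', step (TZ (setX d1 d2) (setX f1 f2) e) (rho x) = Some m' & sim_rel (q1, q2) m'.
Proof.
move=> He R1 R2 H; have [th Hx] := PS_local_Z_STheta He H.
have [Hmove F1 F2] := psync_component_step H.
have He' : e \in S2 :|: S1 by rewrite setUC.
have [[P1 O1] [P2 O2]] := (reach_good_sets public1 R1, reach_good_sets public2 R2).
rewrite !sets_of_local_Z /= in P1 O1 P2 O2.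
subst x; case: th Hmove F1 F2 {H} => [t||e'] Hmove F1 F2.
- have Ht : t \in S1 :|: S2.
    by case: Hmove => /gT_alph_LEv Ht; rewrite inE Ht ?orbT.
  have Hidle1 : ~ gT_alph G1 S2 (STheta (LEv t) e) -> t \in S2.
    by move=> nA; case: Hmove => // /gT_alph_LEv.
  have Hidle2 : ~ gT_alph G2 S1 (STheta (LEv t) e) -> t \in S1.
    by move=> nA; case: Hmove => // /gT_alph_LEv.
  move: F1 F2 => /(follow_Z_LEv R1 He Hidle1)[d1' [Hd1 ->]].
  move=> /(follow_Z_LEv R2 He' Hidle2)[d2' [Hd2 ->]].
  exists (TZ (setX d1' d2') (setX f1 f2) e); last exact: SimZ.
  by apply: tpo_step_ZZ; apply: det_d_step_nsync Hd1 Hd2.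
- move: F1 F2 => /(follow_Z_LEps R1)[d1' [f1' [Hd1 Hf1 ->]]].
  move=> /(follow_Z_LEps R2)[d2' [f2' [Hd2 Hf2 ->]]].
  exists (TW (setX d1 d2) (setX f1 f2) (AEv e)); last exact: SimW.
  by apply: tpo_step_ZW; [apply: det_d_step_nsync Hd1 Hd2 | apply: det_step_nsync Hf1 Hf2].
- have Ee : e' = e.
    by case: Hmove => [/(component_step_moves F1)|/(component_step_moves F2)] /gT_trans_LEr.
  subst e'; move: F1 F2 => /(follow_Z_LEr R1)[f1' [Hf1 ->]].
  move=> /(follow_Z_LEr R2)[f2' [Hf2 ->]].
  exists (TW (setX d1 d2) (setX f1 f2) (AEr e)); last exact: SimW.
  by apply: tpo_step_ZW_erase; apply: det_step_nsync Hf1 Hf2.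
Qed.

Lemma sim_step_W d1 f1 d2 f2 a x q1 q2 :
  act_e a \in S1 :|: S2 -> reach1 (local_W S1 d1 f1 a) -> reach2 (local_W S2 d2 f2 a) ->
  PS (local_W S1 d1 f1 a, local_W S2 d2 f2 a) x (q1, q2) ->
  exists2 m', step (TW (setX d1 d2) (setX f1 f2) a) (rho x) = Some m' & sim_rel (q1, q2) m'.
Proof.
move=> He R1 R2 H; have Hx := PS_local_W_SW He H.
have [_ F1 F2] := psync_component_step H.
have [[P1 O1] [P2 O2]] := (reach_good_sets public1 R1, reach_good_sets public2 R2).
rewrite !sets_of_local_W /= in P1 O1 P2 O2.
subst x; case: a He R1 R2 F1 F2 {H} => e He R1 R2 F1 F2.
- move: F1 F2 => /(follow_W_AEv R1)[d1' [f1' [Hd1 Hf1 ->]]].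
  move=> /(follow_W_AEv R2)[d2' [f2' [Hd2 Hf2 ->]]].
  exists (TY (setX d1' d2') (setX f1' f2')); last exact: SimY.
  by apply: tpo_step_WY; [apply: det_d_step_nsync Hd1 Hd2 | apply: det_step_nsync Hf1 Hf2].
- move: F1 F2 => /(follow_W_AEr R1)[f1' [Hf1 ->]] /(follow_W_AEr R2)[f2' [Hf2 ->]].
  exists (TY (setX d1 d2) (setX f1' f2')); last exact: SimY.
  by apply: tpo_step_WY_erase; apply: det_step_nsync Hf1 Hf2.
Qed.

Definition simulated (p : gstate Q1 E * gstate Q2 E) (m : gstate (Q1 * Q2) E) :=
  [/\ sim_rel p m, reach1 p.1 & reach2 p.2].

Lemma simulated_step p m x p' :
  simulated p m -> PS p x p' -> exists2 m', step m (rho x) = Some m' & simulated p' m'.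
Proof.
case: p' => q1 q2 [Hrel R1 R2] H.
suff [m' Hm Hrel'] : exists2 m', step m (rho x) = Some m' & sim_rel (q1, q2) m'.
  case: p Hrel R1 R2 H => p1 p2 _ R1 R2 H; have [_ F1 F2] := psync_component_step H.
  exists m' => //; split=> //; [apply: reach_follow R1 F1 | apply: reach_follow R2 F2].
case: Hrel R1 R2 H => [d1 f1 d2 f2|d1 f1 d2 f2 e He|d1 f1 d2 f2 a He] R1 R2 H.
- exact: sim_step_Y R1 R2 H.
- exact: sim_step_Z He R1 R2 H.
- exact: sim_step_W He R1 R2 H.
Qed.

Lemma simulated_lpath p s q m :
  simulated p m -> lpath PS p s q ->
  exists q', lpath (tpo_rel (det_d N) (det N)) m (map (@rho E) s) q'.
Proof.
move=> + H; elim: H m => [p0 m _|p0 x p' s' q' Hx _ IH m Hsim].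
  by exists m; constructor.
have [m' Hm /IH[q'' Hq'']] := simulated_step Hsim Hx.
by exists q''; apply: lp_cons Hq''.
Qed.

End Simulation.

Theorem theorem4 (E Q1 Q2 : finType) (G1 : nfa E Q1) (G2 : nfa E Q2) :
  nfa_wf G1 -> nfa_wf G2 ->
  ~~ (UR G1 (ninit G1) \subset nsecret G1) ->
  ~~ (UR G2 (ninit G2) \subset nsecret G2) ->
  forall s : seq (sym E),
  (forall x, List.In x s -> gT_alph G1 (alph G2) x \/ gT_alph G2 (alph G1) x) ->
  (exists q, lpath (psync (gT_alph G1 (alph G2)) (gT_trans G1 (alph G2))
                          (gT_alph G2 (alph G1)) (gT_trans G2 (alph G1)))
                   (gT_init G1, gT_init G2) s q) ->
  exists q, lpath (tpo_rel (det_d (nsync G1 G2)) (det (nsync G1 G2)))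
                  (tpo_init (det_d (nsync G1 G2)) (det (nsync G1 G2)))
                  (map (@rho E) s) q.
Proof.
move=> _ _ public1 public2 s _ [q Hq].
apply: (simulated_lpath public1 public2 _ Hq).
split; [|by exists [::]; constructor..].
by rewrite /tpo_init /= UR_nsync_setX; apply: SimY.
Qed.
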